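(* In the El Gamal–Costa deterministic interference channel with feedback, under any feedback encoding functions and for every $i\ge1$, letting $U_i=(V_1^{i-1},V_2^{i-1})$, the messages $W_1$ and $W_2$ are conditionally independent given $U_i$, and consequently $X_{1i}$ and $X_{2i}$ are conditionally independent given $U_i$.
   Context: El Gamal–Costa deterministic interference channel: finite alphabets $\mathcal{X}_k,\mathcal{V}_k,\mathcal{Y}_k$ ($k=1,2$); deterministic functions $g_k:\mathcal{X}_k\to\mathcal{V}_k$ and $f_1:\mathcal{X}_1\times\mathcal{V}_2\to\mathcal{Y}_1$, $f_2:\mathcal{X}_2\times\mathcal{V}_1\to\mathcal{Y}_2$, with at each time $V_{ki}=g_k(X_{ki})$, $Y_{1i}=f_1(X_{1i},V_{2i})$, $Y_{2i}=f_2(X_{2i},V_{1i})$. The El Gamal–Costa condition holds: $V_2$ is a deterministic function of $(Y_1,X_1)$ and $V_1$ of $(Y_2,X_2)$. Independent messages $W_1,W_2$ (uniform on finite sets); with feedback, $X_{ki}=f_k^i(W_k,Y_k^{i-1})$ for deterministic functions $f_k^i$. $A^{j}=(A_1,\dots,A_j)$; $U_1$ is constant. *)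

From HB Require Import structures.
From mathcomp Require Import all_boot all_order all_algebra.
Set Implicit Arguments. Unset Strict Implicit. Unset Printing Implicit Defensive.
Import Order.TTheory GRing.Theory Num.Theory.

Definition Pr (Om : finType) (E : pred Om) : rat :=
  (#|[pred w | E w]|%:R / #|Om|%:R)%R.

Definition cond_indep (Om : finType) (A B C : eqType)
  (X : Om -> A) (Y : Om -> B) (Z : Om -> C) : Prop :=
  forall (a : A) (b : B) (c : C),
    (Pr (fun w => [&& X w == a, Y w == b & Z w == c])
       * Pr (fun w => Z w == c)
     = Pr (fun w => (X w == a) && (Z w == c))
       * Pr (fun w => (Y w == b) && (Z w == c)))%R.

Section Channel.
Variables (X1 X2 V1 V2 Y1 Y2 M1 M2 : finType).
Variables (g1 : X1 -> V1) (g2 : X2 -> V2).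
Variables (f1 : X1 -> V2 -> Y1) (f2 : X2 -> V1 -> Y2).
(* feedback encoders: enc_k i w y^(i-1) = X_{ki} = f_k^i(W_k, Y_k^{i-1}) *)
Variables (enc1 : nat -> M1 -> seq Y1 -> X1) (enc2 : nat -> M2 -> seq Y2 -> X2).

Definition EGC_condition : Prop :=
  (exists h1 : Y1 -> X1 -> V2, forall x1 v2, h1 (f1 x1 v2) x1 = v2) /\
  (exists h2 : Y2 -> X2 -> V1, forall x2 v1, h2 (f2 x2 v1) x2 = v1).

Record symb := Symb { sx1 : X1; sx2 : X2; sv1 : V1; sv2 : V2; sy1 : Y1; sy2 : Y2 }.

(* hist n (w1,w2) = the list of the symbols at times 1..n *)
Fixpoint hist (n : nat) (w : M1 * M2) : seq symb :=
  match n with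
  | 0 => [::]
  | n'.+1 =>
      let h := hist n' w in
      let x1 := enc1 n w.1 (map sy1 h) in
      let x2 := enc2 n w.2 (map sy2 h) in
      let v1 := g1 x1 in
      let v2 := g2 x2 in
      rcons h (Symb x1 x2 v1 v2 (f1 x1 v2) (f2 x2 v1))
  end.

(* X_{1i}, X_{2i} for i >= 1 *)
Definition X1at (i : nat) (w : M1 * M2) : X1 :=
  enc1 i w.1 (map sy1 (hist i.-1 w)).
Definition X2at (i : nat) (w : M1 * M2) : X2 :=
  enc2 i w.2 (map sy2 (hist i.-1 w)).

Definition Uat (i : nat) (w : M1 * M2) : seq V1 * seq V2 :=
  (map sv1 (hist i.-1 w), map sv2 (hist i.-1 w)).
End Channel.

(* Since Y_1 = f_1(X_1, V_2), encoder 1 can rebuild its whole feedback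
   Y_1^{i-1} from W_1 and V_2^{i-1}; symmetrically for encoder 2.  Hence
   U_i is a "rectangle" function of (W_1, W_2): if (w_1, w_2) and
   (w_1', w_2') give the same U_i, so does (w_1, w_2').  On the product
   sample space each fibre of U_i is then a product set on which X_{1i}
   depends only on w_1 and X_{2i} only on w_2, so counting factorises. *)
From HB Require Import structures.
From mathcomp Require Import all_boot all_order all_algebra ring.
Set Implicit Arguments. Unset Strict Implicit. Unset Printing Implicit Defensive.
Import GRing.Theory.

Section ProductCounting.
Variables M1 M2 : finType.

Definition cross_closed (S T : pred (M1 * M2)) : Prop :=
  forall w w', S w -> T w' -> S (w.1, w'.2) && T (w.1, w'.2).

Lemma card_prod_pred (P1 : pred M1) (P2 : pred M2) :
  #|[pred w : M1 * M2 | P1 w.1 && P2 w.2]| = (#|P1| * #|P2|)%N.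
Proof. by rewrite -cardX; apply: eq_card => -[x y]; rewrite !inE. Qed.

Lemma card_predI_cross_closed (S T : pred (M1 * M2)) :
  cross_closed S T ->
  #|predI S T| = (#|[pred w1 | [exists w2, S (w1, w2)]]|
                  * #|[pred w2 | [exists w1, T (w1, w2)]]|)%N.
Proof.
move=> ST; rewrite -card_prod_pred; apply: eq_card => -[w1 w2] /=.
rewrite !inE /=; apply/andP/andP => [[Sw Tw] | [/existsP[x Sx] /existsP[y Ty]]].
  by split; apply/existsP; [exists w2 | exists w1].
by apply/andP; exact: (ST (w1, x) (y, w2)).
Qed.

End ProductCounting.

Section RectangularFibres.
Variables (M1 M2 : finType) (A B C : eqType).
Variables (X : M1 * M2 -> A) (Y : M1 * M2 -> B) (Z : M1 * M2 -> C).

Hypothesis Z_rect : forall w w', Z w = Z w' -> Z (w.1, w'.2) = Z w.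
Hypothesis X_local : forall w1 w2 w2',
  Z (w1, w2) = Z (w1, w2') -> X (w1, w2) = X (w1, w2').
Hypothesis Y_local : forall w1 w1' w2,
  Z (w1, w2) = Z (w1', w2) -> Y (w1, w2) = Y (w1', w2).

Lemma fibre_cross_closed (p : pred A) (q : pred B) (c : C) :
  cross_closed [pred w | p (X w) && (Z w == c)] [pred w | q (Y w) && (Z w == c)].
Proof.
move=> [w1 w2] [w1' w2'] /andP[pX /eqP Zw] /andP[qY /eqP Zw'] /=.
have Zmix : Z (w1, w2') = Z (w1, w2).
  by apply: (@Z_rect (w1, w2) (w1', w2')); rewrite Zw Zw'.
rewrite (X_local Zmix) (Y_local (_ : Z (w1, w2') = Z (w1', w2'))) ?Zmix ?Zw //.
by rewrite pX qY eqxx.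
Qed.

Lemma cond_indep_of_rectangular_fibres : cond_indep X Y Z.
Proof.
move=> a b c; rewrite /Pr.
pose S p := [pred w | p (X w) && (Z w == c)].
pose T q := [pred w | q (Y w) && (Z w == c)].
have cardST p q := card_predI_cross_closed (@fibre_cross_closed p q c).
have -> : #|[pred w | [&& X w == a, Y w == b & Z w == c]]|
          = #|predI (S (pred1 a)) (T (pred1 b))|.
  by apply: eq_card => w; rewrite !inE /= andbACA andbb andbA.
have -> : #|[pred w | Z w == c]| = #|predI (S predT) (T predT)|.
  by apply: eq_card => w; rewrite !inE /= andbb.
have -> : #|[pred w | (X w == a) && (Z w == c)]| = #|predI (S (pred1 a)) (T predT)|.
  by apply: eq_card => w; rewrite !inE /= -andbA andbb.
have -> : #|[pred w | (Y w == b) && (Z w == c)]| = #|predI (S predT) (T (pred1 b))|.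
  by apply: eq_card => w; rewrite !inE /= andbCA andbb.
rewrite !cardST !natrM; ring.
Qed.

End RectangularFibres.

Section FeedbackChannel.
Variables (X1 X2 V1 V2 Y1 Y2 M1 M2 : finType).
Variables (g1 : X1 -> V1) (g2 : X2 -> V2).
Variables (f1 : X1 -> V2 -> Y1) (f2 : X2 -> V1 -> Y2).
Variables (enc1 : nat -> M1 -> seq Y1 -> X1) (enc2 : nat -> M2 -> seq Y2 -> X2).

Local Notation hist := (hist g1 g2 f1 f2 enc1 enc2).
Local Notation V1s n w := (map (@sv1 _ _ _ _ _ _) (hist n w)).
Local Notation V2s n w := (map (@sv2 _ _ _ _ _ _) (hist n w)).
Local Notation Y1s n w := (map (@sy1 _ _ _ _ _ _) (hist n w)).
Local Notation Y2s n w := (map (@sy2 _ _ _ _ _ _) (hist n w)).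

Lemma Y1s_determined n w1 w2 w2' :
  V2s n (w1, w2) = V2s n (w1, w2') -> Y1s n (w1, w2) = Y1s n (w1, w2').
Proof.
elim: n => [|n IH] //=; rewrite !map_rcons /= => /rcons_inj[/IH eY1 eV2].
by rewrite eY1 eV2.
Qed.

Lemma Y2s_determined n w1 w1' w2 :
  V1s n (w1, w2) = V1s n (w1', w2) -> Y2s n (w1, w2) = Y2s n (w1', w2).
Proof.
elim: n => [|n IH] //=; rewrite !map_rcons /= => /rcons_inj[/IH eY2 eV1].
by rewrite eY2 eV1.
Qed.

Lemma Vs_rect n w1 w1' w2 w2' :
  V1s n (w1, w2') = V1s n (w1', w2) -> V2s n (w1, w2') = V2s n (w1', w2) ->
  V1s n (w1, w2) = V1s n (w1, w2') /\ V2s n (w1, w2) = V2s n (w1', w2).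
Proof.
elim: n => [|n IH] //=; rewrite !map_rcons /=.
move=> /rcons_inj[eV1 eV1n] /rcons_inj[eV2 eV2n].
have [IH1 IH2] := IH eV1 eV2.
have eY1 : Y1s n (w1, w2) = Y1s n (w1, w2') by apply: Y1s_determined; rewrite IH2.
have eY2 : Y2s n (w1, w2) = Y2s n (w1', w2) by apply: Y2s_determined; rewrite IH1.
by rewrite IH1 IH2 eY1 eY2; split; congr rcons; rewrite -?eV1n -?eV2n.
Qed.

Local Notation U i := (Uat g1 g2 f1 f2 enc1 enc2 i).

Lemma Uat_rect i w w' : U i w = U i w' -> U i (w.1, w'.2) = U i w.
Proof.
case: w w' => [w1 w2] [w1' w2'] [eV1 eV2]; rewrite /Uat /=.
by have [-> ->] := Vs_rect eV1 eV2; rewrite eV2.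
Qed.

Lemma X1at_local i w1 w2 w2' :
  U i (w1, w2) = U i (w1, w2') ->
  X1at g1 g2 f1 f2 enc1 enc2 i (w1, w2) = X1at g1 g2 f1 f2 enc1 enc2 i (w1, w2').
Proof. by case=> _ eV2; rewrite /X1at (Y1s_determined eV2). Qed.

Lemma X2at_local i w1 w1' w2 :
  U i (w1, w2) = U i (w1', w2) ->
  X2at g1 g2 f1 f2 enc1 enc2 i (w1, w2) = X2at g1 g2 f1 f2 enc1 enc2 i (w1', w2).
Proof. by case=> eV1 _; rewrite /X2at (Y2s_determined eV1). Qed.

End FeedbackChannel.

Theorem claim3 (X1 X2 V1 V2 Y1 Y2 M1 M2 : finType)
  (g1 : X1 -> V1) (g2 : X2 -> V2)
  (f1 : X1 -> V2 -> Y1) (f2 : X2 -> V1 -> Y2)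
  (hEGC : EGC_condition f1 f2)
  (enc1 : nat -> M1 -> seq Y1 -> X1) (enc2 : nat -> M2 -> seq Y2 -> X2)
  (i : nat) (hi : (1 <= i)%N) :
  cond_indep (fun w : M1 * M2 => w.1) (fun w : M1 * M2 => w.2)
             (Uat g1 g2 f1 f2 enc1 enc2 i)
  /\ cond_indep (X1at g1 g2 f1 f2 enc1 enc2 i) (X2at g1 g2 f1 f2 enc1 enc2 i)
                (Uat g1 g2 f1 f2 enc1 enc2 i).
Proof.
have U_rect := @Uat_rect _ _ _ _ _ _ _ _ g1 g2 f1 f2 enc1 enc2 i.
split; apply: cond_indep_of_rectangular_fibres => //.
- exact: X1at_local.
- exact: X2at_local.
Qed.
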